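(* Let $p\in\Delta_d$ and let $\pi$ be a permutation of $[d]$ with $p_{(i)}:=p_{\pi(i)}$ non-increasing in $i$, and suppose $\tfrac12< p_{(1)}<\tfrac56$. Fix $h\in\{2,\dots,d\}$ with $p_{(h)}>0$ and define the $(h-1)$-parameter sub-model: for $\theta=(\theta_2,\dots,\theta_h)$, let $P_\theta$ be the distribution on $[d]$ with $P_\theta(\pi(i))=\theta_i$ for $2\le i\le h$, $P_\theta(\pi(1))=\theta_1:=1-\sum_{i=2}^h\theta_i-\sum_{i=h+1}^d p_{(i)}$, and $P_\theta(\pi(i))=p_{(i)}$ for $i>h$. Let $\theta(p)=(p_{(2)},\dots,p_{(h)})$, let $0<B\le p_{(h)}/3$ and $\mathcal{N}_{B,h}(p)=\theta(p)+[-B,B]^{h-1}$. Then $P_{\theta'}$ is a valid distribution for all $\theta'\in\mathcal{N}_{B,h}(p)$, and for every channel $W$ from $[d]$ to a finite alphabet $\mathcal{Y}$ with $|\mathcal{Y}|\le 2^b$ and every $\theta'\in\mathcal{N}_{B,h}(p)$, $$\operatorname{Tr}\left(I_W(\theta')\right)\le 2^b\left(6h+\frac{3}{2p_{(h)}}\right)+\frac{3h}{2p_{(h)}},$$ where $I_W(\theta')$ is the Fisher information matrix (with respect to $(\theta_2,\dots,\theta_h)$) of $Y\sim W(\cdot\mid X)$, $X\sim P_{\theta'}$.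
   Context: $\Delta_d$ denotes the probability simplex in $\mathbb{R}^d$. The Fisher information matrix of $Y$ is $[I_W(\theta)]_{jk}=\sum_{y}\frac{\partial_{\theta_j}P^Y_\theta(y)\,\partial_{\theta_k}P^Y_\theta(y)}{P^Y_\theta(y)}$ where $P^Y_\theta(y)=\sum_x W(y\mid x)P_\theta(x)$. *)

From HB Require Import structures.
From mathcomp Require Import all_boot all_order all_algebra.
From mathcomp Require Import fingroup perm.
From mathcomp Require Import reals topology normedtype derive.
Import numFieldNormedType.Exports.
Set Implicit Arguments. Unset Strict Implicit. Unset Printing Implicit Defensive.
Import Order.TTheory GRing.Theory Num.Theory.
Local Open Scope ring_scope.

(* Sorted positions are
   0-based: the paper's p_(i) is  p (pi (i-1)).  The paper's h is  h0.+1
   where h0 : 'I_d is the 0-based position of the last free parameter.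
   A parameter vector theta is a function 'I_d -> R indexed by sorted
   positions; only the coordinates 0 < i <= h0 (paper's theta_2..theta_h)
   are used. *)

Section Model.
Variables (R : realType) (d : nat).

Definition in_simplex (p : 'I_d -> R) :=
  (forall i, 0 <= p i) /\ \sum_i p i = 1.

Definition is_param (h0 : 'I_d) (i : 'I_d) : bool := (0 < i)%N && (i <= h0)%N.

Definition Ptheta (p : 'I_d -> R) (pi : 'S_d) (h0 : 'I_d)
    (theta : 'I_d -> R) (x : 'I_d) : R :=
  let i := (pi^-1)%g x in
  if is_param h0 i then theta i
  else if (i == 0 :> nat) then
    1 - \sum_(j : 'I_d | is_param h0 j) theta j
      - \sum_(j : 'I_d | (h0 < j)%N) p (pi j)
  else p (pi i).

Definition in_nbhd (p : 'I_d -> R) (pi : 'S_d) (h0 : 'I_d) (B : R)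
    (theta : 'I_d -> R) :=
  forall i, is_param h0 i -> `|theta i - p (pi i)| <= B.

Definition PY (Y : finType) (W : 'I_d -> Y -> R) (P : 'I_d -> R) (y : Y) : R :=
  \sum_x W x y * P x.

Definition shift (theta : 'I_d -> R) (j : 'I_d) (t : R) : 'I_d -> R :=
  fun i => if i == j then theta i + t else theta i.

Definition dPY (Y : finType) (W : 'I_d -> Y -> R) (p : 'I_d -> R) (pi : 'S_d)
    (h0 : 'I_d) (theta : 'I_d -> R) (j : 'I_d) (y : Y) : R :=
  derive1 (fun t : R => PY W (Ptheta p pi h0 (shift theta j t)) y) 0.

Definition fisher_diag (Y : finType) (W : 'I_d -> Y -> R) (p : 'I_d -> R)
    (pi : 'S_d) (h0 : 'I_d) (theta : 'I_d -> R) (j : 'I_d) : R :=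
  \sum_y (dPY W p pi h0 theta j y ^+ 2) / PY W (Ptheta p pi h0 theta) y.

Definition fisher_trace (Y : finType) (W : 'I_d -> Y -> R) (p : 'I_d -> R)
    (pi : 'S_d) (h0 : 'I_d) (theta : 'I_d -> R) : R :=
  \sum_(j : 'I_d | is_param h0 j) fisher_diag W p pi h0 theta j.

Definition is_channel (Y : finType) (W : 'I_d -> Y -> R) :=
  (forall x y, 0 <= W x y) /\ (forall x, \sum_y W x y = 1).

End Model.

From Pilot Require Import Defs.
From HB Require Import structures.
From mathcomp Require Import all_boot all_order all_algebra.
From mathcomp Require Import fingroup perm.
From mathcomp Require Import reals topology normedtype derive.
From mathcomp Require Import ring lra.
From mathcomp Require Import boolp functions.
Import numFieldNormedType.Exports.
Set Implicit Arguments. Unset Strict Implicit. Unset Printing Implicit Defensive.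
Import Order.TTheory GRing.Theory Num.Theory.
Local Open Scope ring_scope.

(* Moving theta_j by t moves mass t from the top symbol pi(1) to pi(j), so
   P^Y_theta(y) is affine in theta_j with slope W(y|pi(j)) - W(y|pi(1)).
   Since P^Y_theta(y) >= W(y|pi(j)) theta_j + W(y|pi(1)) theta_1, each
   Fisher term is at most W(y|pi(j))/theta_j + W(y|pi(1))/theta_1, and
   summing over y gives [I_W]_jj <= 1/theta_j + 1/theta_1.  On the
   neighbourhood theta_j >= 2 p_(h)/3 and theta_1 > 1/3, whence
   Tr I_W <= h (3/(2 p_(h)) + 3), which is below the stated bound. *)

Lemma derive1_affine (R : realType) (c k : R) :
  derive1 (fun t : R => c + t * k) 0 = k.
Proof.
have -> : (fun t : R => c + t * k) = cst c \+ k \*: id.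
  by apply/funext => t /=; rewrite mulrC.
by rewrite derive1E; apply: derive_val; apply: is_derive_eq; rewrite add0r scaler1.
Qed.

Lemma ler_sqrB_div (R : realFieldType) (a b u v P : R) :
  0 <= a -> 0 <= b -> 0 < u -> 0 < v -> a * u + b * v <= P ->
  (a - b) ^+ 2 / P <= a / u + b / v.
Proof.
move=> a0 b0 u0 v0 HP.
have au0 : 0 <= a / u by apply: divr_ge0; lra.
have bv0 : 0 <= b / v by apply: divr_ge0; lra.
have [->|Pn0] := eqVneq P 0; first by rewrite invr0 mulr0 addr_ge0.
have P0 : 0 < P.
  by rewrite lt_def Pn0 (le_trans _ HP) // addr_ge0 // mulr_ge0 // ltW.
rewrite ler_pdivrMr //; apply: le_trans (ler_wpM2l (addr_ge0 au0 bv0) HP).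
(* (a - b)^2 <= a^2 + b^2, the diagonal part of (a/u + b/v) (a u + b v). *)
have Ea : a / u * (a * u) = a ^+ 2 by field; lra.
have Eb : b / v * (b * v) = b ^+ 2 by field; lra.
have Cab : 0 <= a / u * (b * v) + b / v * (a * u).
  by rewrite addr_ge0 // mulr_ge0 // mulr_ge0 // ltW.
have ab0 : 0 <= a * b by exact: mulr_ge0.
rewrite mulrDl !mulrDr Ea Eb; nra.
Qed.

Section SubModel.
Variables (R : realType) (d : nat) (p : 'I_d -> R) (pi : 'S_d) (h0 i0 : 'I_d).
Hypothesis i0_val : val i0 = 0%N.

Lemma param_neq_top (j : 'I_d) : is_param h0 j -> j != i0.
Proof. by case/andP; rewrite lt0n -val_eqE i0_val. Qed.

Lemma sum_top_params_tail (F : 'I_d -> R) :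
  \sum_i F i =
  F i0 + \sum_(j | is_param h0 j) F j + \sum_(j : 'I_d | (h0 < j)%N) F j.
Proof.
rewrite (bigD1 i0) //= (bigID (fun j : 'I_d => (j <= h0)%N)) /= addrA.
congr (_ + _ + _); apply: eq_bigl => j; rewrite -val_eqE i0_val /is_param.
  by rewrite lt0n.
rewrite -ltnNge; case: (ltnP h0 j) => Hj; rewrite ?andbF ?andbT //.
by apply/eqP => Hj0; rewrite Hj0 in Hj.
Qed.

Lemma Ptheta_param (theta : 'I_d -> R) (j : 'I_d) :
  is_param h0 j -> Ptheta p pi h0 theta (pi j) = theta j.
Proof. by rewrite /Ptheta /= permK => ->. Qed.

Lemma Ptheta_top (theta : 'I_d -> R) :
  Ptheta p pi h0 theta (pi i0) =
  1 - \sum_(j | is_param h0 j) theta j - \sum_(j : 'I_d | (h0 < j)%N) p (pi j).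
Proof. by rewrite /Ptheta /= permK /is_param i0_val. Qed.

Lemma Ptheta_tail (theta : 'I_d -> R) (j : 'I_d) :
  (h0 < j)%N -> Ptheta p pi h0 theta (pi j) = p (pi j).
Proof.
rewrite /Ptheta /= permK /is_param => Hj.
rewrite [(j <= h0)%N]leqNgt Hj andbF; case: eqP => // Hj0; by rewrite Hj0 in Hj.
Qed.

Lemma index_cases (i : 'I_d) : [\/ is_param h0 i, i = i0 | (h0 < i)%N].
Proof.
case Hp: (is_param h0 i); first exact: Or31.
have [Hi|Hi] := eqVneq (val i) 0%N.
  by apply: Or32; apply: val_inj; rewrite Hi i0_val.
by apply: Or33; move: Hp; rewrite /is_param lt0n Hi /= => /negbT; rewrite -ltnNge.
Qed.

Lemma Ptheta_shift (theta : 'I_d -> R) (j : 'I_d) (t : R) (x : 'I_d) :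
  is_param h0 j ->
  Ptheta p pi h0 (Defs.shift theta j t) x =
  Ptheta p pi h0 theta x + t * ((x == pi j)%:R - (x == pi i0)%:R).
Proof.
move=> Hj; have Hj0 := param_neq_top Hj.
rewrite -(permKV pi x); move: ((pi^-1)%g x) => i.
rewrite !(inj_eq (@perm_inj _ pi)).
case: (index_cases i) => [Hi | -> | Hi].
- rewrite !Ptheta_param // /Defs.shift (negbTE (param_neq_top Hi)).
  by case: eqP => _; rewrite ?subr0 ?mulr1 ?mulr0 ?addr0.
- rewrite !Ptheta_top eq_sym (negbTE Hj0) eqxx (bigD1 j) //=.
  rewrite [X in _ = 1 - X - _ + _](bigD1 j) //= /Defs.shift eqxx.
  rewrite (eq_bigr theta); last by move=> k /andP[_ /negbTE ->].
  by rewrite sub0r mulrN1; lra.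
- have Hij : i != j by apply: contraTneq Hi => ->; rewrite -leqNgt; case/andP: Hj.
  have Hi0 : i != i0 by rewrite -val_eqE i0_val -lt0n (leq_ltn_trans _ Hi).
  by rewrite !Ptheta_tail // (negbTE Hij) (negbTE Hi0) subr0 mulr0 addr0.
Qed.

Lemma PY_shift (Y : finType) (W : 'I_d -> Y -> R) (theta : 'I_d -> R)
    (j : 'I_d) (t : R) (y : Y) : is_param h0 j ->
  PY W (Ptheta p pi h0 (Defs.shift theta j t)) y =
  PY W (Ptheta p pi h0 theta) y + t * (W (pi j) y - W (pi i0) y).
Proof.
move=> Hj; rewrite /PY.
under eq_bigr do rewrite Ptheta_shift // mulrDr.
rewrite big_split /=; congr (_ + _).
have Hji : pi j != pi i0 by rewrite (inj_eq (@perm_inj _ pi)) param_neq_top.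
rewrite (bigD1 (pi j)) //= (bigD1 (pi i0)) 1?eq_sym //=.
rewrite !eqxx [pi i0 == pi j]eq_sym (negbTE Hji).
rewrite big1; last by move=> x /andP[/negbTE -> /negbTE ->]; rewrite subrr !mulr0.
by rewrite /= addr0; lra.
Qed.

Lemma dPY_param (Y : finType) (W : 'I_d -> Y -> R) (theta : 'I_d -> R)
    (j : 'I_d) (y : Y) : is_param h0 j ->
  dPY W p pi h0 theta j y = W (pi j) y - W (pi i0) y.
Proof.
move=> Hj; rewrite /dPY (_ : (fun t => _) = fun t =>
    PY W (Ptheta p pi h0 theta) y + t * (W (pi j) y - W (pi i0) y)).
  exact: derive1_affine.
by apply/funext => t; rewrite PY_shift.
Qed.

Lemma fisher_diag_le (Y : finType) (W : 'I_d -> Y -> R) (theta : 'I_d -> R)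
    (j : 'I_d) :
  is_channel W -> (forall x, 0 <= Ptheta p pi h0 theta x) ->
  is_param h0 j -> 0 < theta j -> 0 < Ptheta p pi h0 theta (pi i0) ->
  fisher_diag W p pi h0 theta j <= 1 / theta j + 1 / Ptheta p pi h0 theta (pi i0).
Proof.
move=> [W0 W1] P0 Hj thj0 top0; rewrite /fisher_diag.
set q0 := Ptheta p pi h0 theta (pi i0).
have Hji : pi i0 != pi j by rewrite (inj_eq (@perm_inj _ pi)) eq_sym param_neq_top.
apply: le_trans (_ : _ <= \sum_y (W (pi j) y / theta j + W (pi i0) y / q0)) _.
  apply: ler_sum => y _; rewrite dPY_param //.
  apply: ler_sqrB_div => //.
  rewrite /PY (bigD1 (pi j)) //= Ptheta_param // (bigD1 (pi i0)) //= addrA lerDl.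
  by apply: sumr_ge0 => x _; exact: mulr_ge0.
by rewrite big_split /= -!mulr_suml !W1.
Qed.

Lemma sum_params_const_le (c : R) : 0 <= c ->
  \sum_(j : 'I_d | is_param h0 j) c <= (h0.+1)%:R * c.
Proof.
move=> c0.
rewrite (eq_bigl (fun j : 'I_d => (0 < j)%N && (j < h0.+1)%N)); last first.
  by move=> j; rewrite /is_param ltnS.
rewrite -(big_ord_widen_cond _ (fun j => (0 < j)%N) (fun _ => c) (ltn_ord h0)).
rewrite big_mkcond /=; apply: le_trans (_ : _ <= \sum_(j < h0.+1) c) _.
  by apply: ler_sum => j _; case: ifP.
by rewrite sumr_const card_ord mulr_natl.
Qed.

End SubModel.

Section Neighbourhood.
Variables (R : realType) (d : nat) (p : 'I_d -> R) (pi : 'S_d) (h0 i0 : 'I_d).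
Variables (B : R) (theta : 'I_d -> R).
Hypothesis i0_val : val i0 = 0%N.
Hypothesis p_simplex : in_simplex p.
Hypothesis p_sorted : forall i j : 'I_d, (i <= j)%N -> p (pi j) <= p (pi i).
Hypothesis p_top_gt : 2^-1 < p (pi i0).
Hypothesis ph_gt0 : 0 < p (pi h0).
Hypothesis B_le : B <= p (pi h0) / 3.
Hypothesis theta_nbhd : in_nbhd p pi h0 B theta.

Let pS := \sum_(j | is_param h0 j) p (pi j).
Let pT := \sum_(j : 'I_d | (h0 < j)%N) p (pi j).

Lemma nbhd_param_diff (j : 'I_d) : is_param h0 j ->
  `|theta j - p (pi j)| <= p (pi j) / 3.
Proof.
move=> Hj; apply: le_trans (theta_nbhd Hj) _; apply: le_trans B_le _.
by rewrite ler_pM2r ?invr_gt0 ?ltr0n //; apply: p_sorted; case/andP: Hj.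
Qed.

Lemma nbhd_param_ge (j : 'I_d) : is_param h0 j -> 2 / 3 * p (pi h0) <= theta j.
Proof.
move=> Hj; have := nbhd_param_diff Hj; rewrite ler_norml => /andP[Hlo _].
have : p (pi h0) <= p (pi j) by rewrite p_sorted //; case/andP: Hj.
lra.
Qed.

Lemma nbhd_top_gt : 3^-1 < Ptheta p pi h0 theta (pi i0).
Proof.
have [p0 p1] := p_simplex.
have Hsum : p (pi i0) + pS + pT = 1.
  by rewrite -p1 (reindex_inj (@perm_inj _ pi)) (sum_top_params_tail h0 i0_val).
have pT0 : 0 <= pT by exact: sumr_ge0.
have Hth : \sum_(j | is_param h0 j) theta j - pS <= pS / 3.
  rewrite /pS -sumrB mulr_suml; apply: ler_sum => j Hj.
  have := ler_norm (theta j - p (pi j)); have := nbhd_param_diff Hj; lra.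
rewrite Ptheta_top // -/pT; have := p_top_gt; lra.
Qed.

Lemma nbhd_Ptheta_ge0 (x : 'I_d) : 0 <= Ptheta p pi h0 theta x.
Proof.
rewrite -(permKV pi x); case: (index_cases h0 i0_val ((pi^-1)%g x)) => [Hi | -> | Hi].
- by rewrite Ptheta_param //; have := nbhd_param_ge Hi; have := ph_gt0; lra.
- by have := nbhd_top_gt; lra.
- by rewrite Ptheta_tail //; case: p_simplex.
Qed.

Lemma nbhd_Ptheta_simplex : in_simplex (Ptheta p pi h0 theta).
Proof.
split; first exact: nbhd_Ptheta_ge0.
rewrite (reindex_inj (@perm_inj _ pi)) (sum_top_params_tail h0 i0_val) Ptheta_top //.
have -> : \sum_(j | is_param h0 j) Ptheta p pi h0 theta (pi j) =
          \sum_(j | is_param h0 j) theta j.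
  by apply: eq_bigr => j; exact: Ptheta_param.
have -> : \sum_(j : 'I_d | (h0 < j)%N) Ptheta p pi h0 theta (pi j) =
          \sum_(j : 'I_d | (h0 < j)%N) p (pi j).
  by apply: eq_bigr => j; exact: Ptheta_tail.
lra.
Qed.

Lemma nbhd_fisher_trace_le (Y : finType) (W : 'I_d -> Y -> R) :
  is_channel W ->
  fisher_trace W p pi h0 theta <= (h0.+1)%:R * (3 / (2 * p (pi h0)) + 3).
Proof.
move=> HW; have top_gt := nbhd_top_gt; have ph := ph_gt0.
apply: le_trans (sum_params_const_le h0 _); last first.
  by apply: addr_ge0; [apply: divr_ge0|]; lra.
apply: ler_sum => j Hj.
have th_ge := nbhd_param_ge Hj.
have th_gt0 : 0 < theta j by lra.
apply: le_trans (fisher_diag_le i0_val HW nbhd_Ptheta_ge0 Hj th_gt0 _) _; first lra.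
apply: lerD.
  rewrite ler_pdivrMr; last lra.
  by rewrite mulrAC ler_pdivlMr; lra.
by rewrite ler_pdivrMr; lra.
Qed.

End Neighbourhood.

Theorem mainTheorem8 (R : realType) (d : nat) (p : 'I_d -> R) (pi : 'S_d)
  (h0 : 'I_d) (B : R) :
  in_simplex p ->
  (forall i j : 'I_d, (i <= j)%N -> p (pi j) <= p (pi i)) ->
  (forall i0 : 'I_d, (i0 = 0 :> nat) -> 2^-1 < p (pi i0) /\ p (pi i0) < 5 / 6) ->
  (1 <= h0)%N ->
  0 < p (pi h0) ->
  0 < B -> B <= p (pi h0) / 3 ->
  (forall theta : 'I_d -> R, in_nbhd p pi h0 B theta ->
     in_simplex (Ptheta p pi h0 theta)) /\
  (forall (Y : finType) (b : nat) (W : 'I_d -> Y -> R),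
     (#|Y| <= 2 ^ b)%N -> is_channel W ->
     forall theta : 'I_d -> R, in_nbhd p pi h0 B theta ->
       fisher_trace W p pi h0 theta <=
         2 ^+ b * (6 * (h0.+1)%:R + 3 / (2 * p (pi h0)))
         + 3 * (h0.+1)%:R / (2 * p (pi h0))).
Proof.
move=> p_simplex p_sorted p_top _ ph_gt0 _ B_le.
pose i0 : 'I_d := Ordinal (leq_ltn_trans (leq0n h0) (ltn_ord h0)).
have i0_val : val i0 = 0%N by [].
have [p_top_gt _] := p_top i0 i0_val.
split=> [theta th_nbhd | Y b W _ HW theta th_nbhd].
  exact: nbhd_Ptheta_simplex i0_val p_simplex p_sorted p_top_gt ph_gt0 B_le th_nbhd.
apply: le_trans (nbhd_fisher_trace_le i0_val p_simplex p_sorted p_top_gt ph_gt0 B_le th_nbhd HW) _.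
have e1 : 1 <= (2 : R) ^+ b by apply: exprn_ege1; lra.
have hq : 0 <= 3 / (2 * p (pi h0)) by apply: divr_ge0; lra.
have hn : 0 <= (h0.+1)%:R :> R by [].
have : 0 <= (2 ^+ b - 1) * (6 * (h0.+1)%:R + 3 / (2 * p (pi h0))).
  by apply: mulr_ge0; lra.
rewrite (mulrC 3%:R) -mulrA.
nra.
Qed.
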